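(* Let $M$ be a finite monoid and $A$ a finite subset of $M$ with $A\cap U(M)\neq\emptyset$, where $U(M)$ is the set of invertible elements of $M$. Let $V=\mathbb{C}\langle\overline{A}\rangle\subseteq\mathbb{C}[M]$. Then for every $0<\lambda\leq1$, the unique atom $\mathcal{H}_\lambda$ of $V$ containing $1$ is a subalgebra of $\mathbb{C}[M]$ which contains $\mathcal{H}_l(A):=\{x\in\mathbb{C}[M]\mid x\overline{A}\subseteq\mathbb{C}\langle\overline{A}\rangle\}$ and satisfies $|BA|\geq|A|+\lambda|B|-\lambda\dim_{\mathbb{C}}(\mathcal{H}_\lambda)$ and $\dim_{\mathbb{C}}(\mathcal{H}_\lambda)\geq|H_A|$ for every finite subset $B$ of $M$ with $B\cap U(M)\neq\emptyset$. In particular $|BA|\geq|A|+|B|-\dim_{\mathbb{C}}(\mathcal{H}_1)$ and $\dim_{\mathbb{C}}(\mathcal{H}_1)\geq|H_A|$.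
   Context: $\mathbb{C}[M]$ is the monoid algebra with basis $\{e_g\mid g\in M\}$ and $e_ge_{g'}=e_{gg'}$; for $S\subseteq M$, $\overline{S}=\{e_s\mid s\in S\}$, and $\mathbb{C}\langle\cdot\rangle$ is linear span. $BA=\{ba\mid b\in B,a\in A\}\subseteq M$. $H_A=\{h\in M\mid hA=A\}$. Connectivity relative to $V$ and $\lambda$: for a finite-dimensional subspace $W\subseteq\mathbb{C}[M]$, $c(W)=\dim_{\mathbb{C}}\mathbb{C}\langle WV\rangle-\lambda\dim_{\mathbb{C}}W$ where $WV=\{wv\}$; $\kappa$ is the infimum of $c(W)$ over subspaces $W$ containing an invertible element of $\mathbb{C}[M]$; a fragment is such a $W$ with $c(W)=\kappa$; an atom is a fragment of minimal dimension (there is a unique atom containing $1$). *)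

From HB Require Import structures.
From mathcomp Require Import all_boot all_order all_algebra all_field.
From mathcomp Require Import complex.
From mathcomp Require Import reals.
Set Implicit Arguments. Unset Strict Implicit. Unset Printing Implicit Defensive.
Import Order.TTheory GRing.Theory Num.Theory.
Local Open Scope ring_scope.

Section MonoidAlgebra.
Variable R : realType.
Local Notation C := (R[i]).
Variable M : finType.
Variable mul : M -> M -> M.
Variable one : M.

Definition is_monoid : Prop :=
  [/\ associative mul, left_id one mul & right_id one mul].

(* the monoid algebra C[M], as the C-vector space of functions M -> C *)
Definition malg := {ffun M -> C^o}.

Definition ebase (g : M) : malg := [ffun h => (h == g)%:R].

(* multiplication in C[M]: extends e_g e_g' = e_{g g'} bilinearly *)
Definition mmul (x y : malg) : malg :=
  [ffun g => \sum_(a : M) \sum_(b : M | mul a b == g) x a * y b].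

Definition munit : malg := ebase one.

Definition alg_invertible (x : malg) : Prop :=
  exists y, mmul x y = munit /\ mmul y x = munit.

Definition units_of : {set M} :=
  [set u | [exists v, (mul u v == one) && (mul v u == one)]].

Definition spanS (S : {set M}) : {vspace malg} :=
  <<[seq ebase s | s <- enum S]>>%VS.

(* C<W V> : the linear span of {w v | w in W, v in V}; by bilinearity it is
   spanned by the products of basis vectors (as for falgebra's (U * V)%VS) *)
Definition prodv (W V : {vspace malg}) : {vspace malg} :=
  <<allpairs mmul (vbasis W) (vbasis V)>>%VS.

Definition conn (V : {vspace malg}) (lam : R) (W : {vspace malg}) : R :=
  (\dim (prodv W V))%:R - lam * (\dim W)%:R.

Definition admissible (W : {vspace malg}) : Prop :=
  exists2 x, x \in W & alg_invertible x.

Definition kappa (V : {vspace malg}) (lam : R) : R :=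
  inf (fun r : R => exists W, admissible W /\ r = conn V lam W).

Definition fragment (V : {vspace malg}) (lam : R) (W : {vspace malg}) : Prop :=
  admissible W /\ conn V lam W = kappa V lam.

Definition atom (V : {vspace malg}) (lam : R) (W : {vspace malg}) : Prop :=
  fragment V lam W /\
  forall W', fragment V lam W' -> (\dim W <= \dim W')%N.

Definition subalgebra (W : {vspace malg}) : Prop :=
  munit \in W /\ forall x y, x \in W -> y \in W -> mmul x y \in W.

Definition Hl (A : {set M}) : malg -> Prop :=
  fun x => forall a, a \in A -> mmul x (ebase a) \in spanS A.

Definition setmul (B A : {set M}) : {set M} :=
  [set mul b a | b in B, a in A].

Definition stabA (A : {set M}) : {set M} :=
  [set h | setmul [set h] A == A].

End MonoidAlgebra.

(* Translating a fragment by an invertible element gives a fragment, and since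
   W |-> dim (W V) is submodular while W |-> dim W is modular, the intersection of
   two fragments sharing an invertible element is again a fragment.  Hence an atom
   H containing 1 satisfies u H = H for every invertible u in H; as 1 + t h is
   invertible for all but finitely many t, H is closed under multiplication.  If
   x V is contained in V, then (H + C x) V = H V, so minimality of the connectivity
   (for lam > 0) forces x into H; this applies to x in H_l(A), in particular to
   e_h for h in H_A.  Finally c(C<B-bar>) >= kappa = c(H), together with
   dim (C<B-bar> V) <= |BA| and dim (H V) >= dim V = |A|, is the bound on |BA|. *)

From Pilot Require Import Defs.
From HB Require Import structures.
From mathcomp Require Import all_boot all_order all_algebra all_field.
From mathcomp Require Import complex.
From mathcomp Require Import reals.
From mathcomp Require Import lra.
From Stdlib Require Import Classical.
Import Order.TTheory GRing.Theory Num.Theory.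
Local Open Scope ring_scope.
Set Implicit Arguments. Unset Strict Implicit. Unset Printing Implicit Defensive.

Lemma ex_min_seq d (T : orderType d) (P : T -> Prop) (s : seq T) :
  (exists2 x, x \in s & P x) ->
  exists m, P m /\ {in s, forall y, P y -> (m <= y)%O}.
Proof.
elim: s => [[]//|x s IHs] [z s_z Pz].
have [[y s_y Py]|no_s] := classic (exists2 y, y \in s & P y); last first.
  have Px : P x by move: s_z; rewrite inE => /predU1P [<-//|s_z]; case: no_s; exists z.
  by exists x; split=> // y; rewrite inE => /predU1P [->//|s_y Py]; case: no_s; exists y.
have [m [Pm m_min]] := IHs (ex_intro2 _ _ y s_y Py).
have [[Px xm]|not_x] := classic (P x /\ (x <= m)%O).
  exists x; split=> // w; rewrite inE => /predU1P [->//|s_w Pw].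
  exact: le_trans xm (m_min w s_w Pw).
exists m; split=> // w; rewrite inE => /predU1P [-> Px|]; last exact: m_min.
by case: (leP x m) => [xm|/ltW //]; case: not_x.
Qed.

Section MonoidAlgebra.
Variables (R : realType) (M : finType) (mul : M -> M -> M) (one : M).
Hypothesis HM : is_monoid mul one.
Local Notation C := (R[i]).
Local Notation CM := (malg R M).
Local Notation e := (@ebase R M).
Local Notation mm := (@mmul R M mul).
Local Notation u1 := (munit R one).
Local Notation prodv := (Defs.prodv mul).
Local Notation invertible := (alg_invertible mul one).

Lemma malg_ebase_sum (x : CM) : x = \sum_a x a *: e a.
Proof.
apply/ffunP => k; rewrite sum_ffunE (bigD1 k) //= big1 => [|a /negbTE ak].
  by rewrite !ffunE eqxx addr0 [RHS]mulr_natr mulr1n.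
by rewrite !ffunE eq_sym ak scaler0.
Qed.

Lemma mmul_is_linear (x : CM) : linear (mm x).
Proof.
move=> c y z; apply/ffunP => g; rewrite !ffunE scaler_sumr -big_split.
apply: eq_bigr => a _; rewrite scaler_sumr -big_split; apply: eq_bigr => b _.
by rewrite !ffunE mulrDr mulrCA.
Qed.

Definition mmulr (y x : CM) := mm x y.

Lemma mmulr_is_linear (y : CM) : linear (mmulr y).
Proof.
move=> c x z; apply/ffunP => g; rewrite !ffunE scaler_sumr -big_split.
apply: eq_bigr => a _; rewrite scaler_sumr -big_split; apply: eq_bigr => b _.
by rewrite !ffunE mulrDl -!mulrA.
Qed.

HB.instance Definition _ (x : CM) :=
  GRing.isLinear.Build C CM CM *:%R (mm x) (mmul_is_linear x).
HB.instance Definition _ (y : CM) :=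
  GRing.isLinear.Build C CM CM *:%R (mmulr y) (mmulr_is_linear y).

Definition Lm (x : CM) : 'End(CM) := linfun (mm x).
Definition Rm (y : CM) : 'End(CM) := linfun (mmulr y).

Lemma LmE x v : Lm x v = mm x v. Proof. exact: lfunE. Qed.
Lemma RmE y v : Rm y v = mm v y. Proof. exact: lfunE. Qed.

Lemma lfun_ebase_eq (f g : 'End(CM)) : (forall k, f (e k) = g (e k)) -> f = g.
Proof.
move=> fg; apply/lfunP => x; rewrite [x]malg_ebase_sum !linear_sum.
by apply: eq_bigr => a _; rewrite !linearZ /= fg.
Qed.

Lemma mmul_ebase g h : mm (e g) (e h) = e (mul g h).
Proof.
apply/ffunP => k; rewrite !ffunE (bigD1 g) //= [X in _ + X]big1 => [|a /negbTE ag].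
  rewrite addr0 big_mkcond (bigD1 h) //= [X in _ + X]big1 => [|b /negbTE bh].
    by rewrite addr0 !ffunE !eqxx mulr1 eq_sym; case: eqP.
  by rewrite !ffunE bh mulr0 if_same.
by rewrite big1 // => b _; rewrite ffunE ag mul0r.
Qed.

Lemma Lm1 : Lm u1 = \1%VF.
Proof.
case: HM => _ mul1 _; apply: lfun_ebase_eq => k.
by rewrite LmE mmul_ebase mul1 id_lfunE.
Qed.

Lemma Rm1 : Rm u1 = \1%VF.
Proof.
case: HM => _ _ mul1; apply: lfun_ebase_eq => k.
by rewrite RmE mmul_ebase mul1 id_lfunE.
Qed.

Lemma mul1m : left_id u1 mm.
Proof. by move=> x; rewrite -LmE Lm1 id_lfunE. Qed.

Lemma mulm1 : right_id u1 mm.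
Proof. by move=> x; rewrite -RmE Rm1 id_lfunE. Qed.

Lemma mmulA : associative mm.
Proof.
case: HM => mulA _ _.
(* Associativity spreads from basis triples to all triples, one argument at a
   time, since both sides are linear in each argument. *)
have assoc_eee g h k : mm (e g) (mm (e h) (e k)) = mm (mm (e g) (e h)) (e k).
  by rewrite !mmul_ebase mulA.
have assoc_eez g h z : mm (e g) (mm (e h) z) = mm (mm (e g) (e h)) z.
  have /lfunP/(_ z) : (Lm (e g) \o Lm (e h))%VF = Lm (mm (e g) (e h)).
    by apply: lfun_ebase_eq => k; rewrite comp_lfunE !LmE assoc_eee.
  by rewrite comp_lfunE !LmE.
have assoc_eyz g y z : mm (e g) (mm y z) = mm (mm (e g) y) z.
  have /lfunP/(_ y) : (Lm (e g) \o Rm z)%VF = (Rm z \o Lm (e g))%VF.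
    by apply: lfun_ebase_eq => h; rewrite !comp_lfunE !LmE !RmE assoc_eez.
  by rewrite !comp_lfunE !LmE !RmE.
move=> x y z; have /lfunP/(_ x) : Rm (mm y z) = (Rm z \o Rm y)%VF.
  by apply: lfun_ebase_eq => g; rewrite comp_lfunE !RmE assoc_eyz.
by rewrite comp_lfunE !RmE.
Qed.

Lemma invertibleP (u : CM) : invertible u <-> lker (Lm u) == 0%VS.
Proof.
have inj_of_linv v w : mm w v = u1 -> lker (Lm v) == 0%VS.
  move=> wv; apply/lker0P => y z; rewrite !LmE => vyz.
  by rewrite -(mul1m y) -(mul1m z) -wv -!mmulA vyz.
split=> [[w [_ wu]]|ker_u]; first exact: inj_of_linv wu.
have surj v : lker (Lm v) == 0%VS -> {w | mm v w = u1}.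
  by move=> ker_v; exists ((Lm v)^-1%VF u1); rewrite -LmE lker0_lfunVK.
have [w uw] := surj u ker_u.
have [z wz] := surj w (inj_of_linv _ _ uw).
have uz : u = z by rewrite -(mulm1 u) -wz mmulA uw mul1m.
by exists w; rewrite {2}uz.
Qed.

Lemma invertible1 : invertible u1.
Proof. by exists u1; rewrite mul1m. Qed.

Lemma dim_limg_invertible (u : CM) (W : {vspace CM}) :
  invertible u -> \dim (Lm u @: W) = \dim W.
Proof. by move/invertibleP/eqP => ker_u; rewrite limg_dim_eq // ker_u capv0. Qed.

Lemma invertibleM u w : invertible u -> invertible w -> invertible (mm u w).
Proof.
move=> [u' [uu' u'u]] [w' [ww' w'w]]; exists (mm w' u').
by split; rewrite -!mmulA; [rewrite (mmulA w) ww' mul1m | rewrite (mmulA u') u'u mul1m].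
Qed.

Lemma lker_shift_sub_eigenspace (h : CM) (t : C) : t != 0 ->
  (lker (Lm (u1 + t *: h)%R) <= passmx.leigenspace (Lm h) (- t^-1))%VS.
Proof.
move=> t_neq0; apply/subvP => v ker_v.
rewrite memv_ker LmE -RmE linearD linearZ /= !RmE mul1m addrC addr_eq0 in ker_v.
rewrite /passmx.leigenspace memv_ker add_lfunE opp_lfunE scale_lfunE id_lfunE LmE.
by rewrite -[mm h v](scalerK t_neq0) (eqP ker_v) scalerN scaleNr opprK addNr.
Qed.

(* Lm h has at most dim CM eigenvalues, so some - 1 / k, 1 <= k <= dim CM + 1,
   is not among them. *)
Lemma exists_invertible_shift (h : CM) :
  exists2 t : C, t != 0 & invertible (u1 + t *: h)%R.
Proof.
pose chi := char_poly (passmx.mxof (vbasis fullv) (vbasis fullv) (Lm h)).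
pose t (k : nat) : C := k.+1%:R.
have t_neq0 k : t k != 0 by rewrite pnatr_eq0.
pose n := \dim (fullv : {vspace CM}).
have : ~~ all (root chi) [seq - (t k)^-1 | k <- iota 0 n.+1].
  apply/negP => chi_roots.
  have uniq_roots : uniq [seq - (t k)^-1 | k <- iota 0 n.+1].
    rewrite map_inj_uniq ?iota_uniq // => i j /oppr_inj/invr_inj/eqP.
    by rewrite eqr_nat eqSS => /eqP.
  have := max_poly_roots (monic_neq0 (char_poly_monic _)) chi_roots uniq_roots.
  by rewrite size_map size_iota size_char_poly ltnn.
case/allPn => _ /mapP [k _ ->] not_root; exists (t k); first exact: t_neq0.
apply/invertibleP; rewrite -subv0.
apply: subv_trans (lker_shift_sub_eigenspace _ (t_neq0 k)) _.
rewrite subv0 (passmx.leigenspaceE (vbasisP fullv)) passmx.vsof_eq0 ?vbasisP //.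
by move: not_root; rewrite -eigenvalue_root_char => /negPn.
Qed.

Lemma mmul_span_sub (X Y : seq CM) (Z : {vspace CM}) :
  {in X & Y, forall x y, mm x y \in Z} ->
  {in <<X>>%VS & <<Y>>%VS, forall w v, mm w v \in Z}.
Proof.
move=> XYZ w v Xw Yv.
have XvZ x : x \in X -> mm x v \in Z.
  move=> Xx; rewrite -LmE; apply: subvP (memv_img (Lm x) Yv).
  by rewrite limg_span; apply/span_subvP => _ /mapP [y Yy ->]; rewrite LmE XYZ.
rewrite -RmE; apply: subvP (memv_img (Rm v) Xw).
by rewrite limg_span; apply/span_subvP => _ /mapP [x Xx ->]; rewrite RmE XvZ.
Qed.

Lemma memv_prodv (W V : {vspace CM}) w v :
  w \in W -> v \in V -> mm w v \in prodv W V.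
Proof.
rewrite -{1}(span_basis (vbasisP W)) -{1}(span_basis (vbasisP V)).
by apply: mmul_span_sub => x y Wx Vy; rewrite memv_span ?allpairs_f.
Qed.

Lemma prodvP (W V Z : {vspace CM}) :
  reflect {in W & V, forall w v, mm w v \in Z} (prodv W V <= Z)%VS.
Proof.
apply: (iffP idP) => [/subvP WVZ w v Ww Vv|WVZ]; first by rewrite WVZ ?memv_prodv.
by apply/span_subvP => _ /allpairsP [[x y] [/= Wx Vy ->]]; rewrite WVZ ?vbasis_mem.
Qed.

Lemma prodvSl (W1 W2 V : {vspace CM}) :
  (W1 <= W2)%VS -> (prodv W1 V <= prodv W2 V)%VS.
Proof. by move/subvP=> W12; apply/prodvP => w v W1w Vv; rewrite memv_prodv ?W12. Qed.

Lemma prodvDl (W1 W2 V : {vspace CM}) :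
  prodv (W1 + W2) V = (prodv W1 V + prodv W2 V)%VS.
Proof.
apply/eqP; rewrite eqEsubv subv_add !prodvSl ?addvSl ?addvSr // !andbT.
apply/prodvP => _ v /memv_addP [w1 W1w1 [w2 W2w2 ->]] Vv.
by rewrite -RmE linearD /= !RmE memv_add ?memv_prodv.
Qed.

Lemma prodv_limg (u : CM) (W V : {vspace CM}) :
  prodv (Lm u @: W) V = (Lm u @: prodv W V)%VS.
Proof.
apply/eqP; rewrite eqEsubv; apply/andP; split.
  apply/prodvP => _ v /memv_imgP [w Ww ->] Vv.
  by rewrite LmE -mmulA -[mm u _]LmE; apply: memv_img; apply: memv_prodv.
rewrite limg_span; apply/span_subvP => _ /mapP [_ /allpairsP [[w v] [/= Ww Vv ->]] ->].
rewrite LmE mmulA; apply: memv_prodv; last exact: vbasis_mem.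
by rewrite -LmE; apply: memv_img; apply: vbasis_mem.
Qed.

Lemma subv_prodv1l (W V : {vspace CM}) : u1 \in W -> (V <= prodv W V)%VS.
Proof. by move=> W1; apply/subvP => v Vv; rewrite -(mul1m v) memv_prodv. Qed.

Lemma free_ebase (s : seq M) : uniq s -> free (map e s).
Proof.
elim: s => [|g s IHs] /=; first by rewrite nil_free.
case/andP => g_notin_s uniq_s; rewrite free_cons IHs // andbT.
apply/negP => span_g.
have /(congr1 (fun x : CM => x g)) := coord_span (X := in_tuple (map e s)) span_g.
rewrite ffunE eqxx sum_ffunE big1 => [/eqP|i _]; first by rewrite oner_eq0.
rewrite ffunE (nth_map g) -?(size_map e) // ffunE.
case: eqP => [gi|_]; last by rewrite scaler0.
by move: g_notin_s; rewrite gi mem_nth // -(size_map e).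
Qed.

Lemma dim_spanS (S : {set M}) : \dim (spanS R S) = #|S|.
Proof.
have /eqP := free_ebase (enum_uniq (mem S)).
by rewrite /spanS => ->; rewrite size_map cardE.
Qed.

Lemma dim_prodv_spanS (B S : {set M}) :
  (\dim (prodv (spanS R B) (spanS R S)) <= #|setmul mul B S|)%N.
Proof.
rewrite -dim_spanS dimvS //; apply/prodvP; apply: mmul_span_sub.
move=> _ _ /mapP [b Bb ->] /mapP [a Sa ->]; rewrite mmul_ebase memv_span //.
by rewrite map_f // mem_enum imset2_f // -mem_enum.
Qed.

Section Connectivity.
Variables (V : {vspace CM}) (lam : R).
Hypothesis lam_ge0 : 0 <= lam.
Local Notation conn := (conn mul V lam).
Local Notation kappa := (kappa mul one V lam).
Local Notation admissible := (admissible mul one).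
Local Notation fragment := (fragment mul one V lam).
Local Notation atom := (atom mul one V lam).
Local Notation n := (\dim (fullv : {vspace CM})).

Lemma kappa_le_conn W : admissible W -> kappa <= conn W.
Proof.
move=> adm_W; apply: ge_inf; last by exists W.
exists (- lam * n%:R) => _ [W' [_ ->]].
have : lam * (\dim W')%:R <= lam * n%:R by rewrite ler_wpM2l // ler_nat dimvS ?subvf.
have := ler0n R (\dim (prodv W' V)).
rewrite /Defs.conn; lra.
Qed.

Lemma exists_fragment : exists W, fragment W.
Proof.
pose L := [seq (i%:R - lam * j%:R : R) | i <- iota 0 n.+1, j <- iota 0 n.+1].
have L_conn W : conn W \in L.
  apply/allpairsP; exists (\dim (prodv W V), \dim W).
  by rewrite !mem_iota !add0n !ltnS !dimvS ?subvf.
have adm_full : admissible (fullv : {vspace CM}).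
  by exists u1; [exact: memvf | exact: invertible1].
have [|_ [[W [adm_W ->]] W_min]] :=
    ex_min_seq (P := fun r => exists W, admissible W /\ r = conn W) (s := L).
  by exists (conn fullv); [exact: L_conn | exists fullv].
exists W; split=> //; apply/eqP; rewrite eq_le kappa_le_conn // andbT.
apply: lb_le_inf; first by exists (conn W), W.
by move=> _ [W' [adm_W' ->]]; apply: W_min => //; exists W'.
Qed.

Lemma exists_atom : exists H, atom H.
Proof.
have [W frag_W] := exists_fragment.
have [|_ [[H [frag_H <-]] H_min]] :=
    ex_min_seq (P := fun k => exists H, fragment H /\ \dim H = k) (s := iota 0 n.+1).
  by exists (\dim W); [rewrite mem_iota ltnS dimvS ?subvf | exists W].
exists H; split=> // W' frag_W'; rewrite -leEnat.
by apply: H_min; [rewrite mem_iota ltnS dimvS ?subvf | exists W'].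
Qed.

Lemma conn_limg u W : invertible u -> conn (Lm u @: W) = conn W.
Proof. by move=> inv_u; rewrite /Defs.conn prodv_limg !dim_limg_invertible. Qed.

Lemma fragment_limg u W : invertible u -> fragment W -> fragment (Lm u @: W).
Proof.
move=> inv_u [[w Ww inv_w] conn_W]; split; last by rewrite conn_limg.
by exists (mm u w); [rewrite -LmE; apply: memv_img | apply: invertibleM].
Qed.

Lemma exists_atom1 : exists2 H, atom H & u1 \in H.
Proof.
have [W [frag_W W_min]] := exists_atom.
have [[w Ww [w' [ww' w'w]]] _] := frag_W.
have inv_w' : invertible w' by exists w.
exists (Lm w' @: W)%VS; last by rewrite -w'w -LmE; apply: memv_img.
split; first exact: fragment_limg.
by move=> W' /W_min; rewrite dim_limg_invertible.
Qed.

Lemma fragment_cap X Y : fragment X -> fragment Y -> admissible (X :&: Y) ->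
  fragment (X :&: Y).
Proof.
move=> [[x Xx inv_x] conn_X] [_ conn_Y] adm_XY; split=> //.
apply/eqP; rewrite eq_le kappa_le_conn // andbT.
have adm_sum : admissible (X + Y) by exists x; first exact: subvP (addvSl X Y) _ Xx.
have := kappa_le_conn adm_sum; move: conn_X conn_Y.
rewrite /Defs.conn prodvDl => <- conn_Y le_sum.
have dim_sum : lam * (\dim (X + Y))%:R + lam * (\dim (X :&: Y))%:R =
    lam * (\dim X)%:R + lam * (\dim Y)%:R.
  by rewrite -!mulrDr -!natrD dimv_sum_cap.
have dim_prod_sum : ((\dim (prodv X V + prodv Y V))%:R : R) +
    (\dim (prodv X V :&: prodv Y V))%:R = (\dim (prodv X V))%:R + (\dim (prodv Y V))%:R.
  by rewrite -!natrD dimv_sum_cap.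
have dim_prod_cap : ((\dim (prodv (X :&: Y) V))%:R : R) <=
    (\dim (prodv X V :&: prodv Y V))%:R.
  by rewrite ler_nat dimvS // subv_cap !prodvSl ?capvSl ?capvSr.
lra.
Qed.

(* u H is a fragment meeting H in u, so H :&: u H is a fragment; minimality of
   dim H then gives H = u H. *)
Lemma atom_mmul_invertible H u : atom H -> u1 \in H -> u \in H -> invertible u ->
  {in H, forall y, mm u y \in H}.
Proof.
move=> [frag_H H_min] H1 Hu inv_u y Hy.
have Yu : u \in (Lm u @: H)%VS by rewrite -[u in u \in _]mulm1 -LmE; apply: memv_img.
have frag_Y := fragment_limg inv_u frag_H.
have adm_cap : admissible (H :&: Lm u @: H) by exists u; rewrite ?memv_cap ?Hu.
have /eqP capH : (H :&: Lm u @: H == H)%VS.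
  by rewrite eqEdim capvSl H_min //; apply: fragment_cap.
have /eqP -> : (H == Lm u @: H)%VS.
  by rewrite eqEdim dim_limg_invertible // leqnn andbT -{1}capH capvSr.
by rewrite -LmE; apply: memv_img.
Qed.

Lemma atom_subalgebra H : atom H -> u1 \in H -> subalgebra mul one H.
Proof.
move=> atom_H H1; split=> // h y Hh Hy.
have [t t_neq0 inv_ht] := exists_invertible_shift h.
have := atom_mmul_invertible atom_H H1 _ inv_ht Hy.
rewrite memvD ?memvZ // => /(_ isT).
rewrite -RmE linearD linearZ /= !RmE mul1m => Hy_thy.
by rewrite -[mm h y](scalerK t_neq0) memvZ // -(addKr y (t *: _)) memvD ?memvN.
Qed.

End Connectivity.

Lemma atom_stabilizer (V : {vspace CM}) (lam : R) H x : 0 < lam ->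
  atom mul one V lam H -> u1 \in H -> {in V, forall v, mm x v \in V} -> x \in H.
Proof.
move=> lam_gt0 [[_ conn_H] _] H1 xV; apply/negPn/negP => xNH.
have adm_Hx : admissible mul one (H + <[x]>)%VS.
  by exists u1; [exact: subvP (addvSl H _) _ H1 | exact: invertible1].
have prodv_Hx : prodv (H + <[x]>)%VS V = prodv H V.
  apply/eqP; rewrite eqEsubv [(prodv H V <= _)%VS]prodvSl ?addvSl // andbT.
  rewrite prodvDl subv_add subvv.
  apply: subv_trans (subv_prodv1l _ H1); apply/prodvP => _ v /vlineP [c ->] Vv.
  by rewrite -RmE linearZ /= RmE memvZ ?xV.
have dim_Hx : (\dim H < \dim (H + <[x]>))%N.
  rewrite ltnNge; apply: contra xNH => dim_le.
  have /eqP -> : (H == H + <[x]>)%VS by rewrite eqEdim addvSl.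
  by rewrite memvE addvSr.
have := kappa_le_conn V (ltW lam_gt0) adm_Hx; rewrite -conn_H /Defs.conn prodv_Hx.
have : lam * (\dim H)%:R < lam * (\dim (H + <[x]>))%:R by rewrite ltr_pM2l ?ltr_nat.
lra.
Qed.

Lemma Hl_mmul_spanS (S : {set M}) x :
  Hl mul S x -> {in spanS R S, forall v, mm x v \in spanS R S}.
Proof.
move=> Hl_x v Sv; apply: (mmul_span_sub _ (memv_span (mem_head x [::])) Sv).
by move=> _ _ /[!inE] /eqP -> /mapP [a Sa ->]; apply: Hl_x; rewrite -mem_enum.
Qed.

Lemma Hl_ebase_stab (S : {set M}) h : h \in stabA mul S -> Hl mul S (e h).
Proof.
rewrite inE => /eqP hS a Sa; rewrite mmul_ebase memv_span // map_f // mem_enum.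
by rewrite -hS imset2_f ?set11.
Qed.

Lemma card_setmul_ge (S B : {set M}) (lam : R) H : 0 <= lam ->
  atom mul one (spanS R S) lam H -> u1 \in H -> B :&: units_of mul one != set0 ->
  #|S|%:R + lam * #|B|%:R - lam * (\dim H)%:R <= (#|setmul mul B S|%:R : R).
Proof.
move=> lam_ge0 [[_ conn_H] _] H1 /set0Pn [b].
rewrite !inE => /andP [Bb /existsP [b' /andP [/eqP bb' /eqP b'b]]].
have adm_B : admissible mul one (spanS R B).
  exists (e b); first by rewrite memv_span // map_f // mem_enum.
  by exists (e b'); rewrite !mmul_ebase bb' b'b.
have := kappa_le_conn (spanS R S) lam_ge0 adm_B; rewrite -conn_H /Defs.conn !dim_spanS.
have : (#|S| <= \dim (prodv H (spanS R S)))%N.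
  by rewrite -dim_spanS dimvS // subv_prodv1l.
have := dim_prodv_spanS B S.
rewrite -!(ler_nat R); lra.
Qed.

End MonoidAlgebra.

Theorem theorem7p2 (R : realType) (M : finType) (mul : M -> M -> M) (one : M)
  (HM : is_monoid mul one) (A : {set M})
  (HA : A :&: units_of mul one != set0) (lam : R)
  (Hlam0 : 0 < lam) (Hlam1 : lam <= 1) :
  let V := spanS R A in
  (exists H, atom mul one V lam H /\ munit R one \in H) /\
  forall H, atom mul one V lam H -> munit R one \in H ->
    [/\ subalgebra mul one H,
        (forall x, Hl mul A x -> x \in H),
        (forall B : {set M}, B :&: units_of mul one != set0 ->
            (#|setmul mul B A|%:R : R) >=
              #|A|%:R + lam * #|B|%:R - lam * (\dim H)%:R)
      & (#|stabA mul A| <= \dim H)%N].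
Proof.
move=> V; have lam_ge0 := ltW Hlam0.
split=> [|H atom_H H1].
  by have [H atom_H H1] := exists_atom1 HM V lam_ge0; exists H.
have Hl_H x : Hl mul A x -> x \in H.
  by move/Hl_mmul_spanS; apply: (atom_stabilizer HM Hlam0 atom_H H1).
split=> [||B|].
- exact: (atom_subalgebra HM lam_ge0 atom_H H1).
- exact: Hl_H.
- exact: (card_setmul_ge HM lam_ge0 atom_H H1).
rewrite -(dim_spanS R (stabA mul A)) dimvS //; apply/span_subvP => _ /mapP [h + ->].
by rewrite mem_enum => /(Hl_ebase_stab R); apply: Hl_H.
Qed.
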